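(* Let $\mathcal X$ be finite with $N=|\mathcal X|\ge2$, $0<c<1/N$ and $\varepsilon\ge0$. Then $$\eta_{\mathrm{TV}}(\varepsilon,c)=\sup_{K\in\mathcal M(\varepsilon,c)}\eta^{\mathcal Q_{\mathcal X}(c)}_{\mathrm{TV}}(K).$$
   Context: A kernel $K$ is a row-stochastic matrix with entries $K_{Y|X=x}(y)$, $(K\circ P_X)(y)=\sum_x K_{Y|X=x}(y)P_X(x)$. PML: $\ell_{K\times P_X}(X\to y)=\log\frac{\max_x K_{Y|X=x}(y)}{(K\circ P_X)(y)}$ for full-support $P_X$ and $(K\circ P_X)(y)>0$. $\mathcal Q_{\mathcal X}(c)=\{P_X\in\mathcal P(\mathcal X):\min_x P_X(x)\ge c\}$; $C(K,\mathcal P)=\sup_{P_X\in\mathcal P}\sup_{y:(K\circ P_X)(y)>0}\ell_{K\times P_X}(X\to y)$; $\mathcal M(\varepsilon,c)$ is the set of kernels from $\mathcal X$ to any finite output set with $C(K,\mathcal Q_{\mathcal X}(c))\le\varepsilon$. For a set $\mathcal P\subseteq\mathcal P(\mathcal X)$, $\eta^{\mathcal P}_{\mathrm{TV}}(K)=\sup_{P_X,Q_X\in\mathcal P,\,P_X\ne Q_X}\frac{\mathrm{TV}(K\circ P_X\|K\circ Q_X)}{\mathrm{TV}(P_X\|Q_X)}$, and $\eta_{\mathrm{TV}}(K)=\eta^{\mathcal P(\mathcal X)}_{\mathrm{TV}}(K)$, where $\mathrm{TV}(P\|Q)=\frac12\sum|P-Q|$. Finally $\eta_{\mathrm{TV}}(\varepsilon,c)=\sup_{K\in\mathcal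 M(\varepsilon,c)}\eta_{\mathrm{TV}}(K)$. *)

From HB Require Import structures.
From mathcomp Require Import all_boot all_order all_algebra.
From mathcomp Require Import classical_sets reals exp.
Set Implicit Arguments. Unset Strict Implicit. Unset Printing Implicit Defensive.
Import Order.TTheory GRing.Theory Num.Theory.
Local Open Scope ring_scope.
Local Open Scope classical_set_scope.

Section Defs.
Variable R : realType.

Definition is_prob (X : finType) (P : X -> R) : Prop :=
  (forall x, 0 <= P x) /\ \sum_(x : X) P x = 1.

(* a kernel (row-stochastic matrix) K x y = K_{Y|X=x}(y) *)
Definition is_kernel (X Y : finType) (K : X -> Y -> R) : Prop :=
  forall x, is_prob (K x).

Definition push (X Y : finType) (K : X -> Y -> R) (P : X -> R) (y : Y) : R :=
  \sum_(x : X) K x y * P x.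

Definition TV (X : finType) (P Q : X -> R) : R :=
  2^-1 * \sum_(x : X) `|P x - Q x|.

Definition PML (X Y : finType) (K : X -> Y -> R) (P : X -> R) (y : Y) : R :=
  ln ((\big[Num.max/0]_(x : X) K x y) / push K P y).

Definition Qset (X : finType) (c : R) : set (X -> R) :=
  [set P | is_prob P /\ forall x, c <= P x].

Definition probs (X : finType) : set (X -> R) := [set P | is_prob P].

Definition Cap (X Y : finType) (K : X -> Y -> R) (Ps : set (X -> R)) : R :=
  sup [set l | exists P, Ps P /\ exists y, 0 < push K P y /\ l = PML K P y].

Definition inM (X Y : finType) (K : X -> Y -> R) (eps c : R) : Prop :=
  is_kernel K /\ Cap K (@Qset X c) <= eps.

Definition eta_TV_on (X Y : finType) (K : X -> Y -> R) (Ps : set (X -> R)) : R :=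
  sup [set r | exists P Q, Ps P /\ Ps Q /\ P <> Q /\
                 r = TV (push K P) (push K Q) / TV P Q].

Definition eta_TV (X Y : finType) (K : X -> Y -> R) : R := eta_TV_on K (@probs X).

Definition eta_TV_ec (X : finType) (eps c : R) : R :=
  sup [set r | exists (Y : finType) (K : X -> Y -> R), inM K eps c /\ r = eta_TV K].

End Defs.

(* The map P |-> c + (1 - N c) P sends every distribution into Q_X(c), is
   injective, and scales P - Q, hence also (K o P) - (K o Q), by the same factor
   1 - N c > 0.  So every TV ratio realised on P(X) is realised on Q_X(c), and
   eta_TV(K) = eta^{Q_X(c)}_TV(K) for every kernel K. *)
From mathcomp Require Import all_boot all_order all_algebra.
From mathcomp Require Import boolp classical_sets reals exp.
Set Implicit Arguments. Unset Strict Implicit. Unset Printing Implicit Defensive.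
Import Order.TTheory GRing.Theory Num.Theory.
Local Open Scope ring_scope.
Local Open Scope classical_set_scope.

Section ShrinkToQset.
Variables (R : realType) (X : finType) (c : R).
Hypotheses (c_gt0 : 0 < c) (cN_lt1 : c * #|X|%:R < 1).

Lemma TV_scale (Z : finType) (f g f' g' : Z -> R) (t : R) :
  0 < t -> (forall z, f' z - g' z = t * (f z - g z)) ->
  TV f' g' = t * TV f g.
Proof.
move=> t_gt0 fgE; rewrite /TV mulrCA; congr (_ * _).
by rewrite mulr_sumr; apply: eq_bigr => z _; rewrite fgE normrM gtr0_norm.
Qed.

Let t := 1 - c * #|X|%:R.
Let t_gt0 : 0 < t. Proof. by rewrite subr_gt0. Qed.

Definition shrink (P : X -> R) (x : X) : R := c + t * P x.

Lemma shrinkB (P Q : X -> R) x : shrink P x - shrink Q x = t * (P x - Q x).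
Proof. by rewrite /shrink opprD addrACA subrr add0r mulrBr. Qed.

Lemma push_shrinkB (Y : finType) (K : X -> Y -> R) (P Q : X -> R) y :
  push K (shrink P) y - push K (shrink Q) y = t * (push K P y - push K Q y).
Proof.
rewrite /push -!sumrB mulr_sumr; apply: eq_bigr => x _.
by rewrite -!mulrBr shrinkB mulrCA.
Qed.

Lemma shrink_inj : injective shrink.
Proof.
move=> P Q PQ; apply/funext => x; apply/eqP.
have := congr1 (fun F => F x - shrink Q x) PQ; rewrite /= subrr shrinkB => /eqP.
by rewrite mulf_eq0 gt_eqF //= subr_eq0.
Qed.

Lemma shrink_Qset (P : X -> R) : is_prob P -> Qset c (shrink P).
Proof.
move=> [P_ge0 P_sum1]; have tP_ge0 x : 0 <= t * P x by rewrite mulr_ge0 ?P_ge0 ?ltW.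
split; [split|] => [x||x]; rewrite /shrink.
- by rewrite addr_ge0 ?tP_ge0 // ltW.
- by rewrite big_split /= sumr_const -mulr_sumr P_sum1 mulr1 -mulr_natr addrC subrK.
- by rewrite lerDl.
Qed.

Lemma eta_TV_Qset (Y : finType) (K : X -> Y -> R) :
  eta_TV K = eta_TV_on K (@Qset R X c).
Proof.
rewrite /eta_TV /eta_TV_on; congr sup; apply/seteqP; split => r /=.
- move=> [P [Q [PP [PQ [P_neq_Q ->]]]]].
  exists (shrink P), (shrink Q).
  do 2 (split; first exact: shrink_Qset).
  split; first by move=> /shrink_inj.
  rewrite (TV_scale t_gt0 (push_shrinkB K P Q)) (TV_scale t_gt0 (shrinkB P Q)).
  by rewrite -[RHS]mulf_div divff ?mul1r // lt0r_neq0.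
- by move=> [P [Q [[PP _] [[PQ _] [P_neq_Q ->]]]]]; exists P, Q.
Qed.

End ShrinkToQset.

Theorem lemma2 (R : realType) (X : finType) (eps c : R) :
  (2 <= #|X|)%N -> 0 < c -> c < (#|X|%:R)^-1 -> 0 <= eps ->
  eta_TV_ec X eps c =
  sup [set r | exists (Y : finType) (K : X -> Y -> R),
                 inM K eps c /\ r = eta_TV_on K (@Qset R X c)].
Proof.
move=> N_ge2 c_gt0 c_lt _.
have N_gt0 : 0 < (#|X|%:R : R) by rewrite ltr0n (leq_trans _ N_ge2).
have cN_lt1 : c * #|X|%:R < 1 by rewrite -ltr_pdivlMr // div1r.
rewrite /eta_TV_ec; congr sup; apply/seteqP.
by split => r /= [Y [K [MK ->]]]; exists Y, K; rewrite (eta_TV_Qset c_gt0 cN_lt1).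
Qed.
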